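(* Let $G$ be a reaction network with exactly two reactions and suppose $cap_{pos}(G)=2N+1$ with $0\le N<+\infty$. If for a rate-constant vector $\kappa^*$ and a total-constant vector $c^*$, $G$ has $2N+1$ positive steady states in $\mathcal P_{c^*}$ and $N+1$ of them are stable, then $(\gamma_{\tau1}-\gamma_{\tau2})(\beta_{\tau1}-\alpha_{\tau1})<0$, where $\tau$ and $\gamma_{\tau j}$ are computed from $c^*$. In particular, if $\tau$ is the only index in its class $[\tau]$, then $(\alpha_{\tau1}-\alpha_{\tau2})(\beta_{\tau1}-\alpha_{\tau1})<0$.
   Context: A reaction network $G$ has species $X_1,\dots,X_s$ and $m$ reactions $\sum_{i}\alpha_{ij}X_i\to\sum_i\beta_{ij}X_i$, $\alpha_{ij},\beta_{ij}\in\mathbb Z_{\ge0}$, $(\alpha_{1j},\dots,\alpha_{sj})\neq(\beta_{1j},\dots,\beta_{sj})$; here $m=2$. $\mathcal N$ has entries $\beta_{ij}-\alpha_{ij}$, $S=\mathrm{im}\,\mathcal N$. For $\kappa\in\mathbb R^m_{>0}$, $f(\kappa;x)=\mathcal N(\kappa_1\prod_i x_i^{\alpha_{i1}},\kappa_2\prod_i x_i^{\alpha_{i2}})^\top$. When $G$ has a positive steady state, $S$ is one-dimensional; species are then labelled so that $\beta_{11}-\alpha_{11}\ne0$, and for $c\in\mathbb R^{s-1}$, $\mathcal P_c=\{x\in\mathbb R^s_{\ge0}:(\beta_{i1}-\alpha_{i1})x_1-(\beta_{11}-\alpha_{11})x_i=c_{i-1},\ i=2,\dots,s\}$. A steady state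 is $x\ge0$ with $f(\kappa;x)=0$; positive if $x>0$; nondegenerate if $\mathrm{Jac}_f(x)(S)=S$; stable if nondegenerate and all nonzero eigenvalues of $\mathrm{Jac}_f(x)$ have negative real parts. $cap_{pos}(G)$ is the maximal $N\in\mathbb Z_{\ge0}\cup\{+\infty\}$ such that for some $\kappa$ and compatibility class, $G$ has $N$ positive steady states in it. Notation for $c^*$: $A_1=1,B_1=0$, $A_i=\frac{\beta_{i1}-\alpha_{i1}}{\beta_{11}-\alpha_{11}}$, $B_i=-\frac{c^*_{i-1}}{\beta_{11}-\alpha_{11}}$ ($i\ge2$). $[i]=\{k:A_k\ne0,B_k/A_k=B_i/A_i\}$ if $A_i\ne0$, $[i]=\{k:A_k=0\}$ otherwise; species labelled so that $1,\dots,r$ represent the $r$ distinct classes. $\varphi_k=\min_j\sum_{i\in[k]}\alpha_{ij}$, $\gamma_{kj}=\sum_{i\in[k]}\alpha_{ij}-\varphi_k$. $\mathcal J=\{i:A_i\ne0\}$, $\mathcal H=\{k\in\{1,\dots,r\}\cap\mathcal J:\gamma_{k1},\dots,\gamma_{km}\text{ not all equal}\}$. Standing assumption: if for some rate constants $G$ has $N$ positive steady states in $\mathcal P_{c^*}$ with $0<N<\infty$, species are labelled so that $1\in\mathcal H$. $I_i=(-B_i/A_i,+\infty)$ if $A_i>0$, $(0,+\infty)$ if $A_i=0$, $(0,-B_i/A_i)$ if $A_i<0$; $I=\bigcap_{k\in\mathcal H}I_k$; $\tau\in\mathcal H$ has $A_\tau>0$ with $-B_\tau/A_\tau$ the left endpoint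 of $I$. *)

From HB Require Import structures.
From mathcomp Require Import all_boot all_order all_algebra.
From mathcomp Require Import reals.
From mathcomp Require Import complex.
Set Implicit Arguments. Unset Strict Implicit. Unset Printing Implicit Defensive.
Import Order.TTheory GRing.Theory Num.Theory.
Local Open Scope ring_scope.

(* A reaction network with  n.+1  species X_0, ..., X_n (species "1" of the
   paper is index 0) and exactly two reactions, indexed by 'I_2 (reaction "1"
   of the paper is index 0).  Reaction j is  sum_i al i j X_i -> sum_i be i j X_i. *)
Section Network.
Variable R : realType.
Variable n : nat.
Variables (al be : 'I_n.+1 -> 'I_2 -> nat).

Definition stoich (i : 'I_n.+1) (j : 'I_2) : int := (be i j)%:Z - (al i j)%:Z.

Definition proper_network : Prop := forall j : 'I_2, exists i, al i j <> be i j.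

Definition fvec (kappa : 'I_2 -> R) (x : {ffun 'I_n.+1 -> R}) (i : 'I_n.+1) : R :=
  \sum_(j < 2) (stoich i j)%:~R * kappa j * \prod_(k < n.+1) x k ^+ al k j.

(* Jacobian matrix of f(kappa; .) at x (explicit partial derivatives of the
   monomials: d/dx_l x_l^a = a x_l^(a-1)). *)
Definition jac (kappa : 'I_2 -> R) (x : {ffun 'I_n.+1 -> R}) : 'M[R]_n.+1 :=
  \matrix_(i, l) \sum_(j < 2) (stoich i j)%:~R * kappa j *
     ((al l j)%:R * x l ^+ (al l j).-1 * \prod_(k < n.+1 | k != l) x k ^+ al k j).

(* The rows of this matrix are the columns of the stoichiometric matrix N,
   so its row space is S = im N (as a space of row vectors). *)
Definition stoichT : 'M[R]_(2, n.+1) := \matrix_(j, i) (stoich i j)%:~R.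

Definition steady_state kappa (x : {ffun 'I_n.+1 -> R}) : Prop :=
  (forall i, 0 <= x i) /\ (forall i, fvec kappa x i = 0).

Definition positive_steady_state kappa (x : {ffun 'I_n.+1 -> R}) : Prop :=
  (forall i, 0 < x i) /\ (forall i, fvec kappa x i = 0).

(* Jac_f(x)(S) = S;  with row vectors, the image of S under v |-> Jac v is
   the row space of  stoichT *m (jac)^T. *)
Definition nondegenerate kappa x : Prop :=
  (stoichT *m (jac kappa x)^T == stoichT)%MS.

Definition eigenvalue_C (M : 'M[R]_n.+1) (lam : R[i]) : Prop :=
  root (map_poly (fun r : R => r%:C%C) (char_poly M)) lam.

Definition stable kappa x : Prop :=
  nondegenerate kappa x /\
  forall lam : R[i], lam != 0 -> eigenvalue_C (jac kappa x) lam -> complex.Re lam < 0.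

(* Stoichiometric compatibility class P_c, c in R^(s-1) = R^n
   (species labelled so that beta_00 - alpha_00 <> 0). *)
Definition in_class (c : 'I_n -> R) (x : {ffun 'I_n.+1 -> R}) : Prop :=
  (forall i, 0 <= x i) /\
  forall j : 'I_n, (stoich (lift ord0 j) 0)%:~R * x ord0
                   - (stoich ord0 0)%:~R * x (lift ord0 j) = c j.

Definition pss_list kappa c (xs : seq {ffun 'I_n.+1 -> R}) : Prop :=
  uniq xs /\
  forall x, x \in xs <-> (positive_steady_state kappa x /\ in_class c x).

Definition has_n_pss kappa c (K : nat) : Prop :=
  exists xs, pss_list kappa c xs /\ size xs = K.

(* cap_pos(G) = K (finite): K is attained and no (kappa, c) has more than K
   (in particular none has infinitely many) positive steady states. *)
Definition cap_pos_eq (K : nat) : Prop :=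
  (exists kappa : 'I_2 -> R, (forall j, 0 < kappa j) /\ exists c, has_n_pss kappa c K) /\
  (forall kappa : 'I_2 -> R, (forall j, 0 < kappa j) -> forall c (xs : seq {ffun 'I_n.+1 -> R}),
      uniq xs -> (forall x, x \in xs -> positive_steady_state kappa x /\ in_class c x) ->
      (size xs <= K)%N).

Definition num_stable kappa (xs : seq {ffun 'I_n.+1 -> R}) (K : nat) : Prop :=
  exists2 ys : seq {ffun 'I_n.+1 -> R}, uniq ys /\ size ys = K &
    forall x, x \in ys <-> (x \in xs /\ stable kappa x).

Section Cstar.
Variable c : 'I_n -> R.

Definition Acoef (i : 'I_n.+1) : R := (stoich i 0)%:~R / (stoich ord0 0)%:~R.
Definition Bcoef (i : 'I_n.+1) : R :=
  match unlift ord0 i with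
  | None => 0
  | Some j => - c j / (stoich ord0 0)%:~R
  end.

Definition cls (i : 'I_n.+1) : {set 'I_n.+1} :=
  if Acoef i != 0 then
    [set k | (Acoef k != 0) && (Bcoef k / Acoef k == Bcoef i / Acoef i)]
  else [set k | Acoef k == 0].

Definition sum_al (k : 'I_n.+1) (j : 'I_2) : nat := \sum_(i in cls k) al i j.
Definition phi (k : 'I_n.+1) : nat := minn (sum_al k 0) (sum_al k 1).
Definition gam (k : 'I_n.+1) (j : 'I_2) : int := (sum_al k j)%:Z - (phi k)%:Z.

Definition class_reps (r : nat) : Prop :=
  (r <= n.+1)%N /\
  (forall i j : 'I_n.+1, (i < r)%N -> (j < r)%N -> i != j -> j \notin cls i) /\
  (forall k : 'I_n.+1, exists2 i : 'I_n.+1, (i < r)%N & k \in cls i).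

Definition Hset (r : nat) : {set 'I_n.+1} :=
  [set k : 'I_n.+1 | [&& (k < r)%N, Acoef k != 0 & gam k 0 != gam k 1]].

Definition Iint (i : 'I_n.+1) (t : R) : Prop :=
  if 0 < Acoef i then - Bcoef i / Acoef i < t
  else if Acoef i == 0 then 0 < t
  else (0 < t) && (t < - Bcoef i / Acoef i).

Definition Iset (r : nat) (t : R) : Prop := forall k, k \in Hset r -> Iint k t.

Definition left_endpoint (r : nat) (a : R) : Prop :=
  (forall t, Iset r t -> a <= t) /\ (forall e, 0 < e -> exists t, Iset r t /\ t < a + e).

Definition is_tau (r : nat) (tau : 'I_n.+1) : Prop :=
  tau \in Hset r /\ 0 < Acoef tau /\ left_endpoint r (- Bcoef tau / Acoef tau).

End Cstar.
End Network.

(* Along the compatibility class a state is determined by t = x_0 through x_i = A_i t + B_i,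
   and the two reaction vectors are proportional, so the positive steady states are the roots t
   of one polynomial (ss_poly, the first coordinate of f along this line) at which every x_i is
   positive.  The Jacobian has rank one and its only possibly nonzero eigenvalue is the
   derivative of ss_poly, so stable states are roots with negative derivative, and between two
   of them lies another root.  With 2N+1 roots, N+1 of them stable, the least root r1 is stable.
   Let L = -B_tau/A_tau < r1.  The species with A_i > 0 whose zero lies in (L, r1) form whole
   classes outside H, so their reactant sums agree in both reactions; moving all their zeros to
   L - 1 changes the class and multiplies ss_poly by a factor positive on (L, r1].  The new
   polynomial keeps the roots and the sign of the derivative at r1, while just right of L its
   sign is that of the term of lower vanishing order, sum_[tau] al i 0 or sum_[tau] al i 1.  If
   the inequality failed, this sign would force one more root in (L, r1), i.e. 2N+2 positive
   steady states in the shifted class, contradicting cap_pos = 2N+1. *)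

From Pilot Require Import Defs.
From HB Require Import structures.
From mathcomp Require Import all_boot all_order all_algebra.
From mathcomp Require Import reals complex polyrcf.
From mathcomp Require Import ring lra zify.
Set Implicit Arguments. Unset Strict Implicit. Unset Printing Implicit Defensive.
Import Order.TTheory GRing.Theory Num.Theory.
Local Open Scope ring_scope.

Lemma deriv_big_prod (T : eqType) (R : comNzRingType) (s : seq T) (F : T -> {poly R}) :
  uniq s ->
  (\prod_(i <- s) F i)^`() = \sum_(l <- s) (F l)^`() * \prod_(k <- s | k != l) F k.
Proof.
elim: s => [|a s IH] /=; first by rewrite !big_nil derivC.
case/andP => aNs us; rewrite !big_cons derivM IH // eqxx /= mulr_sumr.
congr (_ * _ + _).
  rewrite [LHS]big_seq_cond [RHS]big_seq_cond; apply: eq_bigl => k /=.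
  by case: (boolP (k \in s)) => //= ks; apply/esym; apply: contraNneq aNs => <-.
apply: eq_big_seq => l ls; rewrite big_cons mulrCA.
by case: eqP => [la|_] //; move: aNs; rewrite la ls.
Qed.

Lemma big_I2 (T : nmodType) (F : 'I_2 -> T) : \sum_(j < 2) F j = F 0 + F 1.
Proof. by rewrite big_ord_recl big_ord1; congr (F _ + F _); apply: val_inj. Qed.

Lemma deriv_common_root (R : comNzRingType) (p q u v : {poly R}) r :
  p * u = q * v -> root p r -> root q r -> p^`().[r] * u.[r] = q^`().[r] * v.[r].
Proof.
move=> E /eqP pr /eqP qr; have := congr1 (fun w => w^`().[r]) E.
by rewrite /= !derivM !hornerD !hornerM pr qr !mul0r !addr0.
Qed.

Lemma factor_lowest_power (R : comNzRingType) (U0 U1 : {poly R}) L u v (a b : nat) :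
  a != b -> exists k W,
    u *: (('X - L%:P) ^+ a * U0) + v *: (('X - L%:P) ^+ b * U1) = ('X - L%:P) ^+ k * W /\
    W.[L] = if (a < b)%N then u * U0.[L] else v * U1.[L].
Proof.
move=> neq; wlog ab : a b u v U0 U1 {neq} / (a < b)%N.
  move=> wlog; move: neq; rewrite neq_ltn => /orP[ab|ba].
    by have := wlog a b u v U0 U1 ab; rewrite ab.
  have [k [W [E WL]]] := wlog b a v u U1 U0 ba.
  by exists k, W; rewrite addrC E WL ba ltnNge ltnW.
exists a, (u *: U0 + v *: (('X - L%:P) ^+ (b - a) * U1)); rewrite ab; split.
  by rewrite mulrDr -!scalerAr mulrA -exprD subnKC // ltnW.
by rewrite hornerD !hornerZ hornerM horner_exp hornerXsubC subrr expr0n subn_eq0 leqNgt ab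
  mul0r mulr0 addr0.
Qed.

Lemma eigenvalue_rank_one (F : fieldType) n (u : 'cV[F]_n) (w : 'rV[F]_n) :
  w != 0 -> eigenvalue (u *m w) ((w *m u) 0 0).
Proof.
move=> w0; apply/eigenvalueP; exists w => //.
by rewrite mulmxA {1}[w *m u]mx11_scalar mul_scalar_mx.
Qed.

Lemma prod_exp_fiber (I J : finType) (T : comNzSemiRingType) (A : {pred I}) (key : I -> J)
    (g : I -> T) (e1 e2 : I -> nat) :
  {in A &, forall i j, key i = key j -> g i = g j} ->
  {in A, forall i, \sum_(j in A | key j == key i) e1 j = \sum_(j in A | key j == key i) e2 j} ->
  \prod_(i in A) g i ^+ e1 i = \prod_(i in A) g i ^+ e2 i.
Proof.
move=> g_key e_key; rewrite !(partition_big key xpredT) //=; apply: eq_bigr => k _.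
have [i0 /andP[i0A /eqP <-]|none] := pickP [pred i | (i \in A) && (key i == k)]; last first.
  by rewrite !big_pred0 // => i; have := none i.
have fiber e : \prod_(i in A | key i == key i0) g i ^+ e i =
               g i0 ^+ \sum_(i in A | key i == key i0) e i.
  by rewrite -prodrXr; apply: eq_bigr => i /andP[iA /eqP ki]; rewrite (g_key i i0).
by rewrite !fiber e_key.
Qed.

Section PolySign.
Variable R : rcfType.
Implicit Types (p V : {poly R}) (a b d x : R).

Lemma small_step d a b : 0 < d -> a < b -> exists e, [/\ 0 < e, e < d & a + e < b].
Proof.
move=> d0 ab; exists (Num.min (d / 2) ((b - a) / 2)).
have [ed eb] : Num.min (d / 2) ((b - a) / 2) <= d / 2 /\
               Num.min (d / 2) ((b - a) / 2) <= (b - a) / 2 by rewrite !ge_min !lexx orbT.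
by split; [rewrite lt_min !divr_gt0 ?subr_gt0 | lra | lra].
Qed.

Lemma poly_gt0_near p x : 0 < p.[x] ->
  exists2 d, 0 < d & forall y, `|y - x| < d -> 0 < p.[y].
Proof.
move=> px; have [d d0 Hd] := poly_cont x p px.
by exists d => // y /Hd; rewrite ltr_norml => /andP[h _]; lra.
Qed.

Lemma simple_root_sign p x : root p x -> 0 < p^`().[x] ->
  exists2 d, 0 < d & forall y, `|y - x| < d -> y != x -> 0 < p.[y] * (y - x).
Proof.
move=> /factor_theorem[q ->]; rewrite derivM derivXsubC mulr1 !hornerE subrr mulr0 add0r.
move=> /poly_gt0_near[d d0 Hd]; exists d => // y /Hd qy yx.
by rewrite !hornerE -mulrA mulr_gt0 // -expr2 exprn_even_gt0 //= subr_eq0.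
Qed.

Lemma gt0_right_of_root p a b : root p a -> 0 < p^`().[a] -> a < b ->
  exists y, a < y < b /\ 0 < p.[y].
Proof.
move=> pa dpa ab; have [d d0 Hd] := simple_root_sign pa dpa.
have [e [e0 ed eb]] := small_step d0 ab.
exists (a + e); split; first by apply/andP; split; lra.
have := Hd (a + e); rewrite [a + e - a]addrC addKr gtr0_norm // pmulr_lgt0 //.
by apply; [lra | rewrite -subr_eq0 [a + e - a]addrC addKr gt_eqF].
Qed.

Lemma root_left_of_root p a b : a < b -> 0 < p.[a] -> root p b -> 0 < p^`().[b] ->
  exists c, a < c < b /\ root p c.
Proof.
move=> ab pa pb dpb; have [d d0 Hd] := simple_root_sign pb dpb.
have [e [e0 ed eb]] := small_step d0 ab.
have py : p.[b - e] < 0.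
  have := Hd (b - e); rewrite addrAC subrr add0r normrN gtr0_norm // nmulr_lgt0 ?oppr_lt0 //.
  by apply; [lra | rewrite -subr_eq0 addrAC subrr add0r oppr_eq0 gt_eqF].
have ae : a <= b - e by lra.
have pay : p.[a] * p.[b - e] < 0 by rewrite pmulr_rlt0.
have [c] := poly_ivtoo ae pay.
by rewrite in_itv /= => /andP[ac cb] pc; exists c; split => //; apply/andP; split; lra.
Qed.

Lemma gt0_right_of_XsubC_exp V a b k : 0 < V.[a] -> a < b ->
  exists y, a < y < b /\ 0 < (('X - a%:P) ^+ k * V).[y].
Proof.
move=> Va ab; have [d d0 Hd] := poly_gt0_near Va.
have [e [e0 ed eb]] := small_step d0 ab.
exists (a + e); split; first by apply/andP; split; lra.
rewrite hornerM horner_exp hornerXsubC [a + e - a]addrC addKr mulr_gt0 ?exprn_gt0 // Hd //.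
by rewrite [a + e - a]addrC addKr gtr0_norm //; lra.
Qed.

End PolySign.

Section SeparatedSubseq.
Variable R : realDomainType.
Implicit Types (S T : seq R) (a : R).

(* The largest element of [S] below [a], and [a] itself when there is none. *)
Definition max_below S a :=
  \big[Num.max/head a [seq s <- S | s < a]]_(s <- S | s < a) s.

Lemma max_below_ge S a s : s \in S -> s < a -> s <= max_below S a.
Proof. exact: le_bigmax_seq. Qed.

Lemma max_below_mem S a : has (fun s => s < a) S ->
  (max_below S a \in S) && (max_below S a < a).
Proof.
rewrite has_filter /max_below big_seq_cond => Sa.
apply: (big_ind (fun y => (y \in S) && (y < a))) => [||//].
  have : head a [seq s <- S | s < a] \in [seq s <- S | s < a].
    by case: [seq s <- S | s < a] Sa => //= *; rewrite mem_head.
  by rewrite mem_filter andbC.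
by move=> x y hx hy; rewrite /Num.max; case: ifP.
Qed.

Lemma separated_subseq_min S T N : uniq T -> {subset T <= S} ->
  size S = (2 * N).+1 -> size T = N.+1 ->
  (forall a b, a \in T -> b \in T -> a < b -> exists2 c, c \in S & a < c < b) ->
  exists2 m, m \in T & forall s, s \in S -> m <= s.
Proof.
move=> uT sTS sizeS sizeT sep.
have [/hasP[m mT /allP mS]|/hasPn noMin] := boolP (has (fun m => all (>= m) S) T).
  by exists m.
pose pr := max_below S.
have below a : a \in T -> (pr a \in S) && (pr a < a).
  move=> aT; apply: max_below_mem; have /allPn[s sS] := noMin a aT.
  by rewrite /= -ltNge => sa; apply/hasP; exists s.
have prNT a : a \in T -> pr a \notin T.
  move=> aT; apply/negP => prT; have /andP[prS pra] := below a aT.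
  have [c cS /andP[c1 c2]] := sep _ _ prT aT pra.
  by have := max_below_ge cS c2; rewrite leNgt c1.
have pr_lt a b : a \in T -> b \in T -> a < b -> pr a < pr b.
  move=> aT bT ab; have /andP[_ pra] := below a aT.
  exact: lt_le_trans pra (max_below_ge (sTS a aT) ab).
have pr_inj : {in T &, injective pr}.
  move=> a b aT bT; case: (ltgtP a b) => // [ab|ba] E.
    by have := pr_lt a b aT bT ab; rewrite E ltxx.
  by have := pr_lt b a bT aT ba; rewrite E ltxx.
have : (size (T ++ map pr T) <= size S)%N.
  apply: uniq_leq_size.
    rewrite cat_uniq uT (map_inj_in_uniq pr_inj) uT andbT /=.
    by apply/hasPn => _ /mapP[a aT ->]; exact: prNT.
  move=> x; rewrite mem_cat => /orP[/sTS //|/mapP[a aT ->]].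
  by case/andP: (below a aT).
by rewrite size_cat size_map sizeT sizeS; lia.
Qed.

End SeparatedSubseq.

Section TwoReactions.
Variables (R : realType) (n : nat) (al be : 'I_n.+1 -> 'I_2 -> nat) (kappa : 'I_2 -> R).
Hypothesis kappa_gt0 : forall j, 0 < kappa j.
Hypothesis stoich00_neq0 : stoich al be ord0 0 != 0.

Implicit Types (x : {ffun 'I_n.+1 -> R}) (B : 'I_n.+1 -> R) (t : R).

Local Notation sR i j := ((stoich al be i j)%:~R : R).

Definition mono j x := \prod_(k < n.+1) x k ^+ al k j.
Definition lam := sR ord0 1 / sR ord0 0.

Lemma stoichR00_neq0 : sR ord0 0 != 0.
Proof. by rewrite intr_eq0. Qed.

Lemma fvecE x i :
  fvec al be kappa x i = sR i 0 * kappa 0 * mono 0 x + sR i 1 * kappa 1 * mono 1 x.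
Proof. by rewrite /fvec big_I2. Qed.

Lemma mono_gt0 j x : (forall i, 0 < x i) -> 0 < mono j x.
Proof. by move=> x_gt0; apply: prodr_gt0 => i _; rewrite exprn_gt0. Qed.

Lemma stoich_proportional x : positive_steady_state al be kappa x ->
  (forall i, sR i 1 = lam * sR i 0) /\ lam < 0.
Proof.
move=> [x_gt0 fx0].
have m0 := mono_gt0 0 x_gt0; have m1 := mono_gt0 1 x_gt0.
have k0 := kappa_gt0 0; have k1 := kappa_gt0 1.
set q := kappa 0 * mono 0 x / (kappa 1 * mono 1 x).
have q_gt0 : 0 < q by rewrite divr_gt0 ?mulr_gt0.
have sR1 i : sR i 1 = - q * sR i 0.
  have /eqP := fx0 i; rewrite fvecE addrC addr_eq0 => /eqP h.
  apply: (mulIf (lt0r_neq0 (mulr_gt0 k1 m1))); rewrite mulrA h /q.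
  by field; rewrite !lt0r_neq0.
have lamE : lam = - q by rewrite /lam sR1 mulfK // stoichR00_neq0.
by split=> [i|]; rewrite lamE ?sR1 // oppr_lt0.
Qed.

Hypothesis stoich1E : forall i, sR i 1 = lam * sR i 0.
Hypothesis lam_lt0 : lam < 0.

Local Notation Ac i := (Acoef R al be i).

Lemma Acoef0 : Ac ord0 = 1.
Proof. by rewrite /Acoef divff // stoichR00_neq0. Qed.

Lemma stoich0E i : sR i 0 = Ac i * sR ord0 0.
Proof. by rewrite /Acoef mulfVK // stoichR00_neq0. Qed.

Definition xline (B : 'I_n.+1 -> R) (t : R) : {ffun 'I_n.+1 -> R} :=
  [ffun i => Ac i * t + B i].

Definition line_class (B : 'I_n.+1 -> R) (j : 'I_n) : R :=
  sR (lift ord0 j) 0 * B ord0 - sR ord0 0 * B (lift ord0 j).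

Lemma xline_in_class c B t : c =1 line_class B -> (forall i, 0 <= xline B t i) ->
  in_class al be c (xline B t).
Proof.
move=> cB x_ge0; split=> // j.
by rewrite cB /line_class !ffunE Acoef0 [sR (lift _ _) 0]stoich0E; ring.
Qed.

Lemma in_class_xline c x : in_class al be c x -> x = xline (Bcoef al be c) (x ord0).
Proof.
move=> [_ xc]; apply/ffunP => i; rewrite ffunE /Bcoef.
case: (unliftP ord0 i) => [j|] ->; last by rewrite Acoef0 mul1r addr0.
rewrite -(xc j) [sR (lift _ _) 0]stoich0E.
by field; exact: stoichR00_neq0.
Qed.

Lemma xline_zero B t i : Ac i != 0 -> xline B t i = Ac i * (t - (- B i / Ac i)).
Proof. by move=> A0; rewrite ffunE; field. Qed.

Lemma xline_gt0_between B a b t : (forall i, 0 < xline B a i) ->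
  (forall i, 0 < xline B b i) -> a <= t <= b -> forall i, 0 < xline B t i.
Proof.
move=> xa xb /andP[le_at le_tb] i; have := xa i; have := xb i; rewrite !ffunE.
by have [A0|A0] := lerP 0 (Ac i); nra.
Qed.

Definition lin_poly B i : {poly R} := Ac i *: 'X + (B i)%:P.
Definition mono_poly B j : {poly R} := \prod_(i < n.+1) lin_poly B i ^+ al i j.
Definition ss_poly B : {poly R} :=
  (sR ord0 0 * kappa 0) *: mono_poly B 0 + (sR ord0 1 * kappa 1) *: mono_poly B 1.

Lemma horner_lin_poly B i t : (lin_poly B i).[t] = xline B t i.
Proof. by rewrite /lin_poly ffunE !hornerE. Qed.

Lemma horner_mono_poly B j t : (mono_poly B j).[t] = mono j (xline B t).
Proof.
rewrite /mono_poly horner_prod; apply: eq_bigr => i _.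
by rewrite horner_exp horner_lin_poly.
Qed.

Lemma lin_polyE B i : Ac i != 0 -> lin_poly B i = (Ac i)%:P * ('X - (- B i / Ac i)%:P).
Proof. by move=> A0; rewrite mulrBr mul_polyC -polyCM mulrC divfK // polyCN opprK. Qed.

Lemma fvec_xline B t i : fvec al be kappa (xline B t) i = Ac i * (ss_poly B).[t].
Proof.
rewrite fvecE /ss_poly !hornerE !horner_mono_poly !stoich1E [sR i 0]stoich0E.
ring.
Qed.

Lemma pss_xline B t : positive_steady_state al be kappa (xline B t) <->
  (forall i, 0 < xline B t i) /\ root (ss_poly B) t.
Proof.
split=> -[x_gt0 f0]; split=> //.
  by apply/eqP; have := f0 ord0; rewrite fvec_xline Acoef0 mul1r.
by move=> i; rewrite fvec_xline (eqP f0) mulr0.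
Qed.

Definition mono_deriv x l j :=
  (al l j)%:R * x l ^+ (al l j).-1 * \prod_(k < n.+1 | k != l) x k ^+ al k j.

Definition jac_row x : 'rV[R]_n.+1 :=
  \row_l (kappa 0 * mono_deriv x l 0 + lam * kappa 1 * mono_deriv x l 1).

Definition stoich_col : 'cV[R]_n.+1 := \col_i sR i 0.

Lemma jacE x : jac al be kappa x = stoich_col *m jac_row x.
Proof.
apply/matrixP => i l; rewrite !mxE big_ord1 !mxE big_I2.
by rewrite stoich1E /mono_deriv; ring.
Qed.

Lemma stoichTE :
  stoichT R al be = \col_(j < 2) (if j == 0 then 1 else lam) *m stoich_col^T.
Proof.
apply/matrixP => j i; rewrite !mxE big_ord1 !mxE.
have /orP[/eqP->|/eqP->] : (j == 0) || (j == 1) by case: j => [[|[|]]].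
  by rewrite mul1r.
by rewrite stoich1E.
Qed.

Lemma stoichT_jacT x : stoichT R al be *m (jac al be kappa x)^T =
  (jac_row x *m stoich_col) 0 0 *: stoichT R al be.
Proof.
rewrite jacE stoichTE trmx_mul mulmxA -[_ *m (jac_row x)^T]mulmxA -trmx_mul.
by rewrite {1}[jac_row x *m _]mx11_scalar tr_scalar_mx mul_mx_scalar scalemxAl.
Qed.

(* Qualified to avoid MathComp's [nondegenerate] on sesquilinear forms. *)
Lemma nondegenerate_neq0 x : Defs.nondegenerate al be kappa x ->
  (jac_row x *m stoich_col) 0 0 != 0.
Proof.
rewrite /Defs.nondegenerate stoichT_jacT; apply: contraTneq => ->; rewrite scale0r.
apply/negP => /andP[_ /submx0null/matrixP/(_ 0 ord0)]; rewrite !mxE => /eqP.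
by rewrite (negPf stoichR00_neq0).
Qed.

Lemma deriv_lin_poly B i : (lin_poly B i)^`() = (Ac i)%:P.
Proof. by rewrite /lin_poly derivD derivZ derivX derivC addr0 alg_polyC. Qed.

Lemma deriv_mono_poly B j t :
  (mono_poly B j)^`().[t] = \sum_l Ac l * mono_deriv (xline B t) l j.
Proof.
rewrite /mono_poly deriv_big_prod ?index_enum_uniq // horner_sum; apply: eq_bigr => l _.
rewrite deriv_exp deriv_lin_poly hornerM hornerMn hornerM horner_exp hornerC horner_prod.
under eq_bigr do rewrite horner_exp horner_lin_poly.
by rewrite horner_lin_poly /mono_deriv -mulr_natr; ring.
Qed.

Lemma deriv_ss_poly B t : (ss_poly B)^`().[t] = (jac_row (xline B t) *m stoich_col) 0 0.
Proof.
rewrite /ss_poly derivD !derivZ hornerD !hornerZ !deriv_mono_poly !mulr_sumr -big_split /=.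
rewrite mxE; apply: eq_bigr => l _; rewrite !mxE stoich1E [sR l 0]stoich0E; ring.
Qed.

Lemma stable_deriv_lt0 B t : stable al be kappa (xline B t) -> (ss_poly B)^`().[t] < 0.
Proof.
move=> [nd st]; rewrite deriv_ss_poly; have mu0 := nondegenerate_neq0 nd.
have w0 : jac_row (xline B t) != 0 by apply: contraNneq mu0 => ->; rewrite mul0mx mxE.
have := eigenvalue_rank_one stoich_col w0; rewrite -jacE eigenvalue_root_char => eig.
by apply: (st _ _ (rmorph_root (real_complex R) eig)); rewrite fmorph_eq0.
Qed.

Section CompatibilityClass.
Variables (c : 'I_n -> R) (xs : seq {ffun 'I_n.+1 -> R}).
Hypothesis xs_pss : pss_list al be kappa c xs.

Local Notation Bc := (Bcoef al be c).
Local Notation Phi := (ss_poly Bc).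

Lemma line_class_Bcoef : c =1 line_class Bc.
Proof.
by move=> j; rewrite /line_class /Bcoef unlift_none liftK; field; exact: stoichR00_neq0.
Qed.

Lemma xline_Bcoef0 t : xline Bc t ord0 = t.
Proof. by rewrite ffunE Acoef0 /Bcoef unlift_none mul1r addr0. Qed.

Definition roots := [seq x ord0 | x : {ffun 'I_n.+1 -> R} <- xs].

Lemma rootsP t : t \in roots <-> (forall i, 0 < xline Bc t i) /\ root Phi t.
Proof.
split=> [/mapP[x /(xs_pss.2 x)[x_pss x_c] ->]|[t_gt0 rt]].
  by move: x_pss; rewrite {1}(in_class_xline x_c) => /pss_xline.
apply/mapP; exists (xline Bc t); last by rewrite xline_Bcoef0.
apply/(xs_pss.2 _); split; first exact/pss_xline.
by apply: xline_in_class line_class_Bcoef _ => i; apply/ltW.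
Qed.

Lemma xs_inj : {in xs &, injective (fun x : {ffun 'I_n.+1 -> R} => x ord0)}.
Proof.
move=> x y /(xs_pss.2 x)[_ /in_class_xline ->] /(xs_pss.2 y)[_ /in_class_xline ->] /=.
by rewrite !xline_Bcoef0 => ->.
Qed.

Lemma uniq_roots : uniq roots.
Proof. by rewrite map_inj_in_uniq; [exact: xs_pss.1 | exact: xs_inj]. Qed.

Variable ys : seq {ffun 'I_n.+1 -> R}.
Hypothesis ys_stable : forall x, x \in ys <-> x \in xs /\ stable al be kappa x.

Definition stable_roots := [seq y ord0 | y : {ffun 'I_n.+1 -> R} <- ys].

Lemma stable_rootsP a : a \in stable_roots -> a \in roots /\ Phi^`().[a] < 0.
Proof.
case/mapP => y /ys_stable[yxs y_st] ->; split; first exact: map_f.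
have [_ /in_class_xline yE] := (xs_pss.2 y).1 yxs.
by apply: stable_deriv_lt0; rewrite -yE.
Qed.

Lemma stable_roots_separated a b : a \in stable_roots -> b \in stable_roots -> a < b ->
  exists2 t, t \in roots & a < t < b.
Proof.
move=> /stable_rootsP[/rootsP[a_gt0 ra] da] /stable_rootsP[/rootsP[b_gt0 rb] db] ab.
have dN u : (- Phi)^`().[u] = - Phi^`().[u] by rewrite derivN hornerN.
have [y [/andP[ay yb] py]] : exists y, a < y < b /\ 0 < (- Phi).[y].
  by apply: gt0_right_of_root; rewrite ?rootN ?dN ?oppr_gt0.
have [t [/andP[yt tb] rt]] : exists t, y < t < b /\ root (- Phi) t.
  by apply: root_left_of_root; rewrite ?rootN ?dN ?oppr_gt0.
exists t; last by apply/andP; split; [apply: lt_trans yt|].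
apply/rootsP; split; last by rewrite -rootN.
by apply: (xline_gt0_between a_gt0 b_gt0); apply/andP; split; apply: ltW;
  [apply: lt_trans yt|].
Qed.

Lemma least_root_stable N : uniq ys -> size xs = (2 * N).+1 -> size ys = N.+1 ->
  exists2 r1, r1 \in stable_roots & forall s, s \in roots -> r1 <= s.
Proof.
move=> uys sxs sys; apply: (separated_subseq_min (N := N)).
- by rewrite map_inj_in_uniq //; apply: sub_in2 xs_inj => y /ys_stable[].
- by move=> a /stable_rootsP[].
- by rewrite size_map.
- by rewrite size_map.
- exact: stable_roots_separated.
Qed.

Section Shift.
Variables (r : nat) (tau : 'I_n.+1) (r1 : R).
Hypothesis reps : class_reps al be c r.
Hypothesis tauP : is_tau al be c r tau.
Hypothesis r1_root : r1 \in roots.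
Hypothesis r1_min : forall s, s \in roots -> r1 <= s.
Hypothesis r1_stable : Phi^`().[r1] < 0.

Local Notation cl := (cls al be c).
Local Notation z i := (- Bc i / Ac i).
Local Notation L := (z tau).
Local Notation S j := (sum_al al be c tau j).

Lemma Atau_gt0 : 0 < Ac tau.
Proof. by case: tauP => _ []. Qed.

Lemma L_lt_root s : s \in roots -> L < s.
Proof.
case/rootsP => s_gt0 _; have := s_gt0 tau.
by rewrite xline_zero ?lt0r_neq0 ?Atau_gt0 // pmulr_rgt0 ?Atau_gt0 // subr_gt0.
Qed.

Lemma clsE i : Ac i != 0 -> cl i = [set k | (Ac k != 0) && (z k == z i)].
Proof. by move=> A0; rewrite /cls A0; apply/setP => k; rewrite !inE !mulNr eqr_opp. Qed.

Lemma cls_self i : Ac i != 0 -> i \in cl i.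
Proof. by move=> A0; rewrite clsE // inE A0 eqxx. Qed.

Lemma cls_eq i k : Ac i != 0 -> i \in cl k -> Ac k != 0 /\ cl i = cl k.
Proof.
move=> Ai; have [Ak|Ak] := boolP (Ac k != 0); last by rewrite /cls (negPf Ak) inE (negPf Ai).
by rewrite clsE // inE Ai /= => /eqP e; rewrite !clsE // e.
Qed.

Lemma r1_gt0 i : 0 < xline Bc r1 i.
Proof. by case/rootsP: r1_root. Qed.

Lemma zero_lt_r1 i : 0 < Ac i -> z i < r1.
Proof.
move=> Ai; have := r1_gt0 i.
by rewrite xline_zero ?lt0r_neq0 // pmulr_rgt0 // subr_gt0.
Qed.

Lemma cls_tau_gt0 i : i \in cl tau -> 0 < Ac i /\ z i = L.
Proof.
rewrite clsE ?lt0r_neq0 ?Atau_gt0 // inE => /andP[Ai /eqP zi]; split=> //.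
have := r1_gt0 i; rewrite xline_zero // zi.
by rewrite pmulr_lgt0 // subr_gt0 L_lt_root.
Qed.

Definition shifted : {set 'I_n.+1} := [set i | (0 < Ac i) && (L < z i)].

Lemma shifted_Ac_gt0 i : i \in shifted -> 0 < Ac i.
Proof. by rewrite inE => /andP[]. Qed.

Definition Bshift i := if i \in shifted then Ac i * (1 - L) else Bc i.

Lemma cls_shifted i j : i \in shifted -> (j \in cl i) = (j \in shifted) && (cl j == cl i).
Proof.
rewrite inE => /andP[Ai Lzi]; have Ai0 := lt0r_neq0 Ai.
apply/idP/andP => [|[jM /eqP <-]]; last first.
  by apply: cls_self; move: jM; rewrite inE => /andP[/lt0r_neq0].
rewrite clsE // inE => /andP[Aj0 /eqP zji]; split; last by rewrite !clsE // zji.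
rewrite inE zji Lzi andbT; have := r1_gt0 j.
by rewrite xline_zero // zji pmulr_lgt0 // subr_gt0 zero_lt_r1.
Qed.

Lemma shifted_notin_H (k : 'I_n.+1) : (k < r)%N -> k \in shifted -> k \notin Hset al be c r.
Proof.
move=> kr; rewrite inE => /andP[Ak Lzk]; apply/negP => kH.
(* Otherwise I would lie in I_k = (z k, +oo), although its left end L is below z k. *)
have [_ [_ [_ left_end]]] := tauP.
have [t [It tlt]] := left_end (z k - L) ltac:(by rewrite subr_gt0).
by have := It k kH; rewrite /Iint Ak; lra.
Qed.

Lemma shifted_balanced i : i \in shifted ->
  \sum_(j in cl i) al j 0 = \sum_(j in cl i) al j 1.
Proof.
move=> iM; have [_ [_ cover]] := reps; have [k kr ik] := cover i.
have [Ak0 clik] := cls_eq (lt0r_neq0 (shifted_Ac_gt0 iM)) ik.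
have kM : k \in shifted by have := cls_self Ak0; rewrite -clik cls_shifted // => /andP[].
have := shifted_notin_H kr kM; rewrite inE kr Ak0 /= negbK /gam => /eqP/addIr/eqP.
by rewrite eqz_nat /sum_al -clik => /eqP.
Qed.

Lemma lin_poly_shifted i : i \in shifted ->
  lin_poly Bc i = (Ac i)%:P * ('X - (z i)%:P) /\
  lin_poly Bshift i = (Ac i)%:P * ('X - (L - 1)%:P).
Proof.
move=> iM; have Ai0 := lt0r_neq0 (shifted_Ac_gt0 iM).
rewrite !lin_polyE // /Bshift iM; split=> //.
by rewrite mulNr mulrAC divff // mul1r opprB.
Qed.

Lemma mono_poly_shift :
  mono_poly Bc 0 * mono_poly Bshift 1 = mono_poly Bshift 0 * mono_poly Bc 1.
Proof.
have fiber (g : 'I_n.+1 -> {poly R}) :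
    {in shifted &, forall i j, cl i = cl j -> g i = g j} ->
    \prod_(i in shifted) g i ^+ al i 0 = \prod_(i in shifted) g i ^+ al i 1.
  move=> g_cl; apply: prod_exp_fiber g_cl _ => i iM.
  have E e : \sum_(j in shifted | cl j == cl i) e j = \sum_(j in cl i) e j.
    by apply: eq_bigl => j; rewrite cls_shifted.
  by rewrite !E shifted_balanced.
pose u i := 'X - (z i)%:P; pose v := 'X - (L - 1)%:P.
have u_cl : {in shifted &, forall i j, cl i = cl j -> u i = u j}.
  move=> i j /shifted_Ac_gt0/lt0r_neq0 Ai0 /shifted_Ac_gt0/lt0r_neq0 Aj0 clij.
  by have := cls_self Aj0; rewrite -clij clsE // inE => /andP[_ /eqP zji]; rewrite /u zji.
rewrite /mono_poly -!big_split /= (bigID (mem shifted)) [RHS](bigID (mem shifted)) /=.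
congr (_ * _); last by apply: eq_bigr => i /negPf iM; rewrite /lin_poly /Bshift iM.
transitivity (\prod_(i in shifted)
    ((Ac i)%:P ^+ (al i 0 + al i 1) * (u i ^+ al i 0 * v ^+ al i 1))).
  by apply: eq_bigr => i iM; have [-> ->] := lin_poly_shifted iM; rewrite !exprMn exprD; ring.
transitivity (\prod_(i in shifted)
    ((Ac i)%:P ^+ (al i 0 + al i 1) * (v ^+ al i 0 * u i ^+ al i 1))); last first.
  by apply: eq_bigr => i iM; have [-> ->] := lin_poly_shifted iM; rewrite !exprMn exprD; ring.
rewrite [LHS]big_split [RHS]big_split /=; congr (_ * _).
by rewrite [LHS]big_split [RHS]big_split /= (fiber u u_cl) (fiber (fun=> v)) // mulrC.
Qed.

Lemma ss_poly_shift : Phi * mono_poly Bshift 1 = ss_poly Bshift * mono_poly Bc 1.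
Proof.
by rewrite /ss_poly !mulrDl -!scalerAl mono_poly_shift [mono_poly Bc 1 * _]mulrC.
Qed.

Lemma xline_shift_gt0 t s i : s \in roots -> L <= t <= s ->
  (L < t) || (i \notin cl tau) -> 0 < xline Bshift t i.
Proof.
move=> /rootsP[s_gt0 _] /andP[Lt ts] strict; have := s_gt0 i; rewrite !ffunE /Bshift.
case: ifP => [/shifted_Ac_gt0 Ai _|iM]; first by nra.
have [Ai|Ai] := ltrP 0 (Ac i); last by nra.
have AL : 0 <= Ac i * L + Bc i.
  by move/negbT: iM; rewrite inE Ai -leNgt ler_pdivrMr //; lra.
case/orP: strict => [Lt'|iNtau]; first by nra.
have AL0 : Ac i * L + Bc i != 0.
  apply: contra iNtau => /eqP ALB; rewrite clsE ?lt0r_neq0 ?Atau_gt0 // inE lt0r_neq0 //=.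
  by rewrite (_ : Bc i = - (Ac i * L)); [rewrite opprK mulrAC divff ?mul1r ?lt0r_neq0|lra].
by move: AL; rewrite le_eqVlt eq_sym (negPf AL0) /=; nra.
Qed.

Lemma root_ss_poly_shift s : s \in roots -> root (ss_poly Bshift) s.
Proof.
move=> /rootsP[s_gt0 /eqP rs]; have := congr1 (horner^~ s) ss_poly_shift.
rewrite /= !hornerM rs mul0r horner_mono_poly => /esym/eqP.
by rewrite mulf_eq0 (gt_eqF (mono_gt0 1 s_gt0)) orbF.
Qed.

Lemma deriv_ss_poly_shift : (ss_poly Bshift)^`().[r1] < 0.
Proof.
have := deriv_common_root ss_poly_shift ((rootsP _).1 r1_root).2 (root_ss_poly_shift r1_root).
rewrite !horner_mono_poly => E.
have m1 := mono_gt0 1 r1_gt0.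
have m1' : 0 < mono 1 (xline Bshift r1).
  apply: mono_gt0 => i; apply: (xline_shift_gt0 r1_root).
    by rewrite lexx andbT ltW // L_lt_root.
  by rewrite L_lt_root.
by move: r1_stable; rewrite -(pmulr_llt0 _ m1') E pmulr_llt0.
Qed.

Lemma mono_poly_shift_factor j : exists2 U,
  mono_poly Bshift j = ('X - L%:P) ^+ sum_al al be c tau j * U & 0 < U.[L].
Proof.
exists (\prod_(i in cl tau) (Ac i)%:P ^+ al i j *
        \prod_(i | i \notin cl tau) lin_poly Bshift i ^+ al i j).
  rewrite /mono_poly (bigID (mem (cl tau))) /= mulrA; congr (_ * _).
  rewrite /sum_al -prodrXr -big_split /=; apply: eq_bigr => i itau.
  have [Ai zi] := cls_tau_gt0 itau.
  have iM : i \notin shifted by rewrite inE zi ltxx andbF.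
  by rewrite lin_polyE ?lt0r_neq0 // /Bshift (negPf iM) zi exprMn mulrC.
rewrite hornerM !horner_prod mulr_gt0 //; apply: prodr_gt0 => i itau.
  by rewrite horner_exp hornerC exprn_gt0 //; case: (cls_tau_gt0 itau).
rewrite horner_exp horner_lin_poly exprn_gt0 // (xline_shift_gt0 r1_root) ?itau ?orbT //.
by rewrite lexx ltW // L_lt_root.
Qed.

Lemma shifted_root_below_r1 :
  0 <= ((S 0)%:R - (S 1)%:R) * sR tau 0 ->
  exists2 t0, L < t0 < r1 & root (ss_poly Bshift) t0.
Proof.
move=> sign; have S01 : S 0 != S 1.
  have [/[!inE] /and3P[_ _ gam01] _] := tauP.
  by apply: contraNneq gam01 => e; rewrite /gam e.
have [U0 E0 U0L] := mono_poly_shift_factor 0; have [U1 E1 U1L] := mono_poly_shift_factor 1.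
have [k [W [EW WL]]] :=
  factor_lowest_power U0 U1 L (sR ord0 0 * kappa 0) (sR ord0 1 * kappa 1) S01.
have k0 := kappa_gt0 0; have k1 := kappa_gt0 1.
have WL_lt0 : W.[L] < 0.
  have sgn : 0 <= ((S 0)%:R - (S 1)%:R) * sR ord0 0.
    by move: sign; rewrite [sR tau 0]stoich0E mulrCA pmulr_rge0 // Atau_gt0.
  rewrite WL; case: ltngtP S01 => // [lt01|lt10] _.
    have d_lt0 : (S 0)%:R - (S 1)%:R < 0 :> R by rewrite subr_lt0 ltr_nat.
    have s00 : sR ord0 0 < 0 by rewrite lt_neqAle stoichR00_neq0 -(nmulr_rge0 _ d_lt0).
    by rewrite !pmulr_llt0.
  have d_gt0 : 0 < (S 0)%:R - (S 1)%:R :> R by rewrite subr_gt0 ltr_nat.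
  have s00 : 0 < sR ord0 0 by rewrite lt_def stoichR00_neq0 -(pmulr_rge0 _ d_gt0).
  by rewrite !pmulr_llt0 // stoich1E nmulr_rlt0.
have NPhi : - ss_poly Bshift = ('X - L%:P) ^+ k * - W by rewrite /ss_poly E0 E1 EW mulrN.
have WN : 0 < (- W).[L] by rewrite hornerN oppr_gt0.
have [y [/andP[Ly yr1] py]] := gt0_right_of_XsubC_exp k WN (L_lt_root r1_root).
have [t0 [/andP[yt0 t0r1] rt0]] : exists t0, y < t0 < r1 /\ root (- ss_poly Bshift) t0.
  apply: root_left_of_root => //; first by rewrite NPhi.
    by rewrite rootN root_ss_poly_shift.
  by rewrite derivN hornerN oppr_gt0 deriv_ss_poly_shift.
by exists t0; [apply/andP; split; [apply: lt_trans yt0|] | rewrite -rootN].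
Qed.

Lemma no_root_below_r1 N : size xs = (2 * N).+1 -> cap_pos_eq R al be (2 * N).+1 ->
  forall t0, L < t0 < r1 -> ~~ root (ss_poly Bshift) t0.
Proof.
move=> sxs cap t0 /andP[Lt0 t0r1]; apply/negP => rt0.
have xline_inj : injective (xline Bshift).
  by move=> a b /(congr1 (fun x => x ord0)); rewrite !ffunE Acoef0 !mul1r => /addIr.
pose zs := xline Bshift t0 :: map (xline Bshift) roots.
have zs_uniq : uniq zs.
  rewrite /= (map_inj_uniq xline_inj) uniq_roots andbT.
  by apply/mapP => -[s /r1_min r1s /xline_inj t0s]; move: t0r1; rewrite t0s ltNge r1s.
have pss_shift t : (forall i, 0 < xline Bshift t i) -> root (ss_poly Bshift) t ->
    positive_steady_state al be kappa (xline Bshift t) /\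
    in_class al be (line_class Bshift) (xline Bshift t).
  by move=> t_gt0 rt; split; [exact/pss_xline | apply: xline_in_class => // i; apply: ltW].
have zs_pss x : x \in zs -> positive_steady_state al be kappa x /\
    in_class al be (line_class Bshift) x.
  rewrite inE => /orP[/eqP-> | /mapP[s sr ->]].
    apply: pss_shift rt0 => i; apply: (xline_shift_gt0 r1_root); last by rewrite Lt0.
    by rewrite !ltW.
  apply: pss_shift (root_ss_poly_shift sr) => i; apply: (xline_shift_gt0 sr).
    by rewrite lexx ltW // L_lt_root.
  by rewrite L_lt_root.
have := cap.2 kappa kappa_gt0 _ zs zs_uniq zs_pss.
by rewrite /= !size_map sxs ltnn.
Qed.

Lemma sum_al_tau_sign N : size xs = (2 * N).+1 -> cap_pos_eq R al be (2 * N).+1 ->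
  ((S 0)%:R - (S 1)%:R) * sR tau 0 < 0.
Proof.
move=> sxs cap; rewrite ltNge; apply/negP => /shifted_root_below_r1[t0 t0P rt0].
by have := no_root_below_r1 sxs cap t0P; rewrite rt0.
Qed.

End Shift.

End CompatibilityClass.

End TwoReactions.

Theorem lemma7p8 (R : realType) (n : nat) (al be : 'I_n.+1 -> 'I_2 -> nat)
  (N : nat) (kappa : 'I_2 -> R) (c : 'I_n -> R) (r : nat)
  (xs : seq {ffun 'I_n.+1 -> R}) :
  proper_network al be ->
  stoich al be ord0 0 != 0 ->
  cap_pos_eq R al be (2 * N).+1 ->
  (forall j, 0 < kappa j) ->
  pss_list al be kappa c xs ->
  size xs = (2 * N).+1 ->
  num_stable al be kappa xs N.+1 ->
  class_reps al be c r ->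
  ord0 \in Hset al be c r ->
  forall tau : 'I_n.+1, is_tau al be c r tau ->
    ((gam al be c tau 0 - gam al be c tau 1) * stoich al be tau 0 < 0)%R /\
    (cls al be c tau = [set tau] ->
       (((al tau 0)%:Z - (al tau 1)%:Z) * stoich al be tau 0 < 0)%R).
Proof.
(* The labelling conventions [proper_network] and [ord0 \in Hset] are not needed. *)
move=> _ s00 cap kpos xs_pss sxs [ys [uys sys] ys_stable] reps _ tau tauP.
have [x0 x0xs] : exists x, x \in xs.
  by case: xs sxs {xs_pss ys_stable} => // x ? _; exists x; rewrite mem_head.
have [s1E lam_lt0] := stoich_proportional kpos s00 ((xs_pss.2 x0).1 x0xs).1.
have [r1 /(stable_rootsP s00 s1E xs_pss ys_stable)[r1_root r1_st] r1_min] :=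
  least_root_stable s00 s1E xs_pss ys_stable uys sxs sys.
have sign :=
  sum_al_tau_sign kpos s00 s1E lam_lt0 xs_pss reps tauP r1_root r1_min r1_st sxs cap.
have toZ (a b : nat) : ((a%:R - b%:R) * (stoich al be tau 0)%:~R < 0 :> R) ->
    ((a%:Z - b%:Z) * stoich al be tau 0 < 0)%R.
  by move=> ltR; rewrite -(ltrz0 R) rmorphM [X in X * _]rmorphB /= -!pmulrn.
split; first by rewrite /gam opprB addrA subrK; apply: toZ.
by move=> cl_tau; apply: toZ; rewrite /sum_al cl_tau !big_set1 in sign.
Qed.
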